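(* Let $(\mu,u)$ be a classical structure on $A$ with spiders $\Xi_n^m$ and let $H$ be a complementary endomorphism for it. Then $$(\Xi_3^1\otimes 1_A)\circ(1_A\otimes H\otimes H\otimes 1_A)\circ(1_A\otimes\Xi_1^3)=1_{A\otimes A}.$$
   Context: Setting. $\mathbf C^{pure}$ is a strict symmetric monoidal category with monoidal unit $\mathrm I$, symmetry $\sigma$ and a dagger functor $(-)^\dagger$ (identity on objects, contravariant, involutive, strict monoidal), in which every object $A$ is self-dual: there is $\eta_A:\mathrm I\to A\otimes A$ with $\epsilon_A:=\eta_A^\dagger$, $(\epsilon_A\otimes 1_A)\circ(1_A\otimes\eta_A)=1_A$ and $\sigma_{A,A}\circ\eta_A=\eta_A$. A morphism $U$ is unitary if $U^\dagger\circ U=1$ and $U\circ U^\dagger=1$. Classical structure on $A$: morphisms $\mu:A\otimes A\to A$ and $u:\mathrm I\to A$, with $\delta:=\mu^\dagger$, such that $\mu$ is associative with unit $u$, $\mu\circ\sigma_{A,A}=\mu$, $(1_A\otimes\mu)\circ(\delta\otimes 1_A)=\delta\circ\mu$, $\mu\circ\delta=1_A$, and $\eta_A=\delta\circ u$. Spiders: $\mu_0:=u$, $\mu_1:=1_A$, $\mu_{k+1}:=\mu\circ(\mu_k\otimes 1_A)$, and $\Xi_n^m:=\mu_m^\dagger\circ\mu_n:A^{\otimes n}\to A^{\otimes m}$. Complementary endomorphism: $H:A\to A$ with $(H\otimes 1_A)\circ\eta_A=(1_A\otimes H)\circ\eta_A$, $H^\dagger=H$, $H$ unitary, and $\Xi_2^1\circ(H\otimes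 H)\circ\Xi_1^2=\Xi_0^1\circ\Xi_1^0$. *)

(* Strictness is expressed
   by equalities of objects; morphism equations that need them use the
   transport [castm] along those equalities. *)

Set Implicit Arguments.

Record SMData := {
  Obj : Type;
  Hom : Obj -> Obj -> Type;
  comp : forall X Y Z : Obj, Hom Y Z -> Hom X Y -> Hom X Z;
  idm : forall X : Obj, Hom X X;
  otens : Obj -> Obj -> Obj;
  munit : Obj;
  mtens : forall X Y Z W : Obj, Hom X Y -> Hom Z W -> Hom (otens X Z) (otens Y W);
  sym : forall X Y : Obj, Hom (otens X Y) (otens Y X);
  dag : forall X Y : Obj, Hom X Y -> Hom Y X;
  eta : forall X : Obj, Hom munit (otens X X)
}.

Arguments Hom {s} _ _.
Arguments comp {s X Y Z} _ _.
Arguments idm {s} X.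
Arguments otens {s} _ _.
Arguments munit {s}.
Arguments mtens {s X Y Z W} _ _.
Arguments sym {s} X Y.
Arguments dag {s X Y} _.
Arguments eta {s} X.

Definition castm {C : SMData} {X Y X' Y' : Obj C} (eX : X = X') (eY : Y = Y')
  (f : Hom X Y) : Hom X' Y' :=
  match eX in _ = X1 return Hom X1 Y' with
  | eq_refl => match eY in _ = Y1 return Hom X Y1 with eq_refl => f end
  end.

Definition eps {C : SMData} (X : Obj C) : Hom (otens X X) munit := dag (eta X).

Record SMAxioms (C : SMData) : Prop := {
  comp_assoc : forall (X Y Z W : Obj C) (h : Hom Z W) (g : Hom Y Z) (f : Hom X Y),
      comp h (comp g f) = comp (comp h g) f;
  comp_id_l : forall (X Y : Obj C) (f : Hom X Y), comp (idm Y) f = f;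
  comp_id_r : forall (X Y : Obj C) (f : Hom X Y), comp f (idm X) = f;
  tens_comp : forall (X1 Y1 Z1 X2 Y2 Z2 : Obj C) (g1 : Hom Y1 Z1) (f1 : Hom X1 Y1)
      (g2 : Hom Y2 Z2) (f2 : Hom X2 Y2),
      mtens (comp g1 f1) (comp g2 f2) = comp (mtens g1 g2) (mtens f1 f2);
  tens_id : forall X Y : Obj C, mtens (idm X) (idm Y) = idm (otens X Y);
  assoc_obj : forall X Y Z : Obj C, otens (otens X Y) Z = otens X (otens Y Z);
  unitl_obj : forall X : Obj C, otens munit X = X;
  unitr_obj : forall X : Obj C, otens X munit = X;
  assoc_mor : forall (X Y Z X' Y' Z' : Obj C) (f : Hom X X') (g : Hom Y Y') (h : Hom Z Z'),
      castm (assoc_obj X Y Z) (assoc_obj X' Y' Z') (mtens (mtens f g) h)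
      = mtens f (mtens g h);
  unitl_mor : forall (X Y : Obj C) (f : Hom X Y),
      castm (unitl_obj X) (unitl_obj Y) (mtens (idm munit) f) = f;
  unitr_mor : forall (X Y : Obj C) (f : Hom X Y),
      castm (unitr_obj X) (unitr_obj Y) (mtens f (idm munit)) = f;
  sym_nat : forall (X Y Z W : Obj C) (f : Hom X Y) (g : Hom Z W),
      comp (sym Y W) (mtens f g) = comp (mtens g f) (sym X Z);
  sym_inv : forall X Y : Obj C, comp (sym Y X) (sym X Y) = idm (otens X Y);
  sym_hex : forall X Y Z : Obj C,
      castm (assoc_obj X Y Z) (eq_sym (assoc_obj Y Z X))
        (comp (mtens (idm Y) (sym X Z))
              (castm eq_refl (assoc_obj Y X Z) (mtens (sym X Y) (idm Z))))
      = sym X (otens Y Z);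
  sym_unit : forall X : Obj C,
      castm (unitr_obj X) (unitl_obj X) (sym X munit) = idm X;
  dag_invol : forall (X Y : Obj C) (f : Hom X Y), dag (dag f) = f;
  dag_comp : forall (X Y Z : Obj C) (g : Hom Y Z) (f : Hom X Y),
      dag (comp g f) = comp (dag f) (dag g);
  dag_id : forall X : Obj C, dag (idm X) = idm X;
  dag_tens : forall (X Y Z W : Obj C) (f : Hom X Y) (g : Hom Z W),
      dag (mtens f g) = mtens (dag f) (dag g);
  dag_sym : forall X Y : Obj C, dag (sym X Y) = sym Y X;
  snake : forall X : Obj C,
      castm (unitr_obj X) (unitl_obj X)
        (comp (mtens (eps X) (idm X))
              (castm eq_refl (eq_sym (assoc_obj X X X)) (mtens (idm X) (eta X))))
      = idm X;
  eta_sym : forall X : Obj C, comp (sym X X) (eta X) = eta X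
}.

Record SMDagCat := { smdata :> SMData; smaxioms : SMAxioms smdata }.

Definition assocO {C : SMDagCat} (X Y Z : Obj C) := assoc_obj (smaxioms C) X Y Z.
Definition unitlO {C : SMDagCat} (X : Obj C) := unitl_obj (smaxioms C) X.
Definition unitrO {C : SMDagCat} (X : Obj C) := unitr_obj (smaxioms C) X.

Definition unitary {C : SMData} {X Y : Obj C} (U : Hom X Y) : Prop :=
  comp (dag U) U = idm X /\ comp U (dag U) = idm Y.

Definition classical {C : SMDagCat} (A : Obj C)
  (mu : Hom (otens A A) A) (u : Hom munit A) : Prop :=
  let delta := dag mu in
  comp mu (mtens mu (idm A))
    = castm (eq_sym (assocO A A A)) eq_refl (comp mu (mtens (idm A) mu)) /\
  comp mu (mtens u (idm A)) = castm (eq_sym (unitlO A)) eq_refl (idm A) /\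
  comp mu (mtens (idm A) u) = castm (eq_sym (unitrO A)) eq_refl (idm A) /\
  comp mu (sym A A) = mu /\
  comp (mtens (idm A) mu) (castm eq_refl (assocO A A A) (mtens delta (idm A)))
    = comp delta mu /\
  comp mu delta = idm A /\
  eta A = comp delta u.

Fixpoint tpow {C : SMData} (A : Obj C) (n : nat) : Obj C :=
  match n with
  | 0 => munit
  | S n' => match n' with 0 => A | S _ => otens (tpow A n') A end
  end.

Fixpoint spider {C : SMData} (A : Obj C) (mu : Hom (otens A A) A) (u : Hom munit A)
  (k : nat) : Hom (tpow A k) A :=
  match k return Hom (tpow A k) A with
  | 0 => u
  | S k' =>
      (match k' as m return Hom (tpow A m) A -> Hom (tpow A (S m)) A with
       | 0 => fun _ => idm A
       | S _ => fun r => comp mu (mtens r (idm A))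
       end) (spider A mu u k')
  end.

Definition Xi {C : SMData} (A : Obj C) (mu : Hom (otens A A) A) (u : Hom munit A)
  (n m : nat) : Hom (tpow A n) (tpow A m) :=
  comp (dag (spider A mu u m)) (spider A mu u n).

Definition complementary {C : SMDagCat} (A : Obj C)
  (mu : Hom (otens A A) A) (u : Hom munit A) (H : Hom A A) : Prop :=
  comp (mtens H (idm A)) (eta A) = comp (mtens (idm A) H) (eta A) /\
  dag H = H /\
  unitary H /\
  comp (Xi A mu u 2 1) (comp (mtens H H) (Xi A mu u 1 2))
    = comp (Xi A mu u 0 1) (Xi A mu u 1 0).

Definition reassoc4 {C : SMDagCat} (A : Obj C) :
  otens A (tpow A 3) = otens (tpow A 3) A :=
  eq_trans (eq_sym (assocO A (otens A A) A))
           (f_equal (fun Z => otens Z A) (eq_sym (assocO A A A))).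

(* Written as a string diagram, the left-hand side applies the comultiplication
   delta := mu^dagger twice to the right wire, H to the two middle wires, and
   multiplies the first three wires.  By associativity these three wires compute
   mu o (1 (x) mu (H (x) H) delta), and complementarity replaces
   mu (H (x) H) delta by u u^dagger.  The unit law leaves 1 (x) u^dagger, which
   cancels against the remaining delta by the counit law (u^dagger (x) 1) delta = 1,
   the dagger of the unit law. *)

From Stdlib Require Import ProofIrrelevance.

Section Casts.
Context {C : SMData}.

Lemma castm_irrelevant (X Y X' Y' : Obj C) (eX eX' : X = X') (eY eY' : Y = Y') (f : Hom X Y) :
  castm eX eY f = castm eX' eY' f.
Proof. now rewrite (proof_irrelevance _ eX eX'), (proof_irrelevance _ eY eY'). Qed.

Lemma castm_id (X Y : Obj C) (eX : X = X) (eY : Y = Y) (f : Hom X Y) : castm eX eY f = f.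
Proof. now rewrite (proof_irrelevance _ eX eq_refl), (proof_irrelevance _ eY eq_refl). Qed.

Lemma castm_trans (X Y X1 Y1 X2 Y2 : Obj C) (eX : X = X1) (eY : Y = Y1)
    (eX1 : X1 = X2) (eY1 : Y1 = Y2) (f : Hom X Y) :
  castm eX1 eY1 (castm eX eY f) = castm (eq_trans eX eX1) (eq_trans eY eY1) f.
Proof. now destruct eX1, eY1, eX, eY. Qed.

Lemma comp_castm (X Y Z X' Y' Z' : Obj C) (eX : X = X') (eY eY' : Y = Y') (eZ : Z = Z')
    (g : Hom Y Z) (f : Hom X Y) :
  comp (castm eY eZ g) (castm eX eY' f) = castm eX eZ (comp g f).
Proof. rewrite (proof_irrelevance _ eY' eY). now destruct eX, eY, eZ. Qed.

Lemma comp_castm_l (X Y Y' Z : Obj C) (e : Y = Y') (g : Hom Y Z) (f : Hom X Y') :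
  comp (castm e eq_refl g) f = comp g (castm eq_refl (eq_sym e) f).
Proof. now destruct e. Qed.

Lemma tens_castm_l (X Y X' Y' Z W : Obj C) (eX : X = X') (eY : Y = Y')
    (f : Hom X Y) (g : Hom Z W) :
  mtens (castm eX eY f) g
  = castm (f_equal (fun T => otens T Z) eX) (f_equal (fun T => otens T W) eY) (mtens f g).
Proof. now destruct eX, eY. Qed.

Lemma tens_castm_r (X Y X' Y' Z W : Obj C) (eX : X = X') (eY : Y = Y')
    (f : Hom X Y) (g : Hom Z W) :
  mtens g (castm eX eY f)
  = castm (f_equal (otens Z) eX) (f_equal (otens W) eY) (mtens g f).
Proof. now destruct eX, eY. Qed.

Lemma dag_castm (X Y X' Y' : Obj C) (eX : X = X') (eY : Y = Y') (f : Hom X Y) :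
  dag (castm eX eY f) = castm eY eX (dag f).
Proof. now destruct eX, eY. Qed.

End Casts.

Section StrictMonoidal.
Context {C : SMDagCat}.
Let ax := smaxioms C.

Lemma tens_assoc_r (X Y Z X' Y' Z' : Obj C) (f : Hom X X') (g : Hom Y Y') (h : Hom Z Z') :
  mtens (mtens f g) h
  = castm (eq_sym (assocO X Y Z)) (eq_sym (assocO X' Y' Z')) (mtens f (mtens g h)).
Proof. now rewrite <- (assoc_mor ax), castm_trans, castm_id. Qed.

Lemma tens_comp_idl (X Y Z W : Obj C) (g : Hom Y Z) (f : Hom X Y) :
  mtens (idm W) (comp g f) = comp (mtens (idm W) g) (mtens (idm W) f).
Proof. now rewrite <- (tens_comp ax), (comp_id_l ax). Qed.

Lemma tens_comp_idr (X Y Z W : Obj C) (g : Hom Y Z) (f : Hom X Y) :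
  mtens (comp g f) (idm W) = comp (mtens g (idm W)) (mtens f (idm W)).
Proof. now rewrite <- (tens_comp ax), (comp_id_l ax). Qed.

(* The indices of [castm] are spelled out so that the lemma rewrites goals in
   which [tpow X 3] has been unfolded. *)
Lemma tens_idm_comp_comul (X : Obj C) (d : Hom X (otens X X)) :
  @castm _ _ (otens X (otens (otens X X) X)) _ (otens (otens (otens X X) X) X)
    eq_refl (reassoc4 X) (mtens (idm X) (comp (mtens d (idm X)) d))
  = comp (mtens (castm eq_refl (eq_sym (assocO X X X)) (mtens (idm X) d)) (idm X))
         (castm eq_refl (eq_sym (assocO X X X)) (mtens (idm X) d)).
Proof.
  rewrite tens_castm_l, tens_assoc_r, castm_trans, comp_castm, <- tens_comp_idl.
  apply castm_irrelevant.
Qed.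

End StrictMonoidal.

Section Spiders.
Context {C : SMDagCat} {A : Obj C} {mu : Hom (otens A A) A} {u : Hom munit A}.
Let ax := smaxioms C.

Lemma Xi_0_1 : Xi A mu u 0 1 = u.
Proof. unfold Xi; simpl. now rewrite (dag_id ax), (comp_id_l ax). Qed.

Lemma Xi_1_0 : Xi A mu u 1 0 = dag u.
Proof. unfold Xi; simpl. now rewrite (comp_id_r ax). Qed.

Lemma Xi_2_1 : Xi A mu u 2 1 = mu.
Proof. unfold Xi; simpl. now rewrite (dag_id ax), (comp_id_l ax), (tens_id ax), (comp_id_r ax). Qed.

Lemma Xi_1_2 : Xi A mu u 1 2 = dag mu.
Proof. unfold Xi; simpl. now rewrite (comp_id_r ax), (tens_id ax), (comp_id_r ax). Qed.

Lemma Xi_3_1 : Xi A mu u 3 1 = comp mu (mtens mu (idm A)).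
Proof. unfold Xi; simpl. now rewrite (dag_id ax), (comp_id_l ax), (tens_id ax), (comp_id_r ax). Qed.

Lemma Xi_1_3 : Xi A mu u 1 3 = comp (mtens (dag mu) (idm A)) (dag mu).
Proof.
  unfold Xi; simpl.
  now rewrite (comp_id_r ax), (tens_id ax), (comp_id_r ax), (dag_comp ax), (dag_tens ax), (dag_id ax).
Qed.

Lemma complementary_mul_comul {H : Hom A A} :
  complementary A mu u H -> comp mu (comp (mtens H H) (dag mu)) = comp u (dag u).
Proof.
  intros [_ [_ [_ Hcompl]]].
  now rewrite Xi_2_1, Xi_1_2, Xi_0_1, Xi_1_0 in Hcompl.
Qed.

End Spiders.

Section ClassicalStructure.
Context {C : SMDagCat} {A : Obj C} {mu : Hom (otens A A) A} {u : Hom munit A}.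
Hypothesis hcl : classical A mu u.
Let ax := smaxioms C.

Let comul_r := castm eq_refl (eq_sym (assocO A A A)) (mtens (idm A) (dag mu)).

Lemma counit_comul_l :
  comp (mtens (dag u) (idm A)) (dag mu) = castm eq_refl (eq_sym (unitlO A)) (idm A).
Proof.
  destruct hcl as [_ [Hul _]].
  apply (f_equal dag) in Hul.
  now rewrite (dag_comp ax), (dag_tens ax), (dag_id ax), dag_castm, (dag_id ax) in Hul.
Qed.

Lemma mul_idm_tens_unit_counit :
  comp mu (mtens (idm A) (comp u (dag u))) = castm eq_refl (unitrO A) (mtens (idm A) (dag u)).
Proof.
  destruct hcl as [_ [_ [Hur _]]].
  rewrite tens_comp_idl, (comp_assoc ax), Hur, comp_castm_l, (comp_id_l ax).
  apply castm_irrelevant.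
Qed.

Lemma Xi_3_1_tens_comul_r (h1 h2 : Hom A A) :
  comp (comp (Xi A mu u 3 1) (mtens (mtens (idm A) h1) h2)) comul_r
  = comp mu (mtens (idm A) (comp mu (comp (mtens h1 h2) (dag mu)))).
Proof.
  destruct hcl as [Hassoc _].
  unfold comul_r.
  rewrite <- (comp_assoc ax), Xi_3_1, Hassoc, tens_assoc_r, !comp_castm, castm_id.
  now rewrite <- (comp_assoc ax), <- !tens_comp_idl.
Qed.

End ClassicalStructure.

Theorem mainTheorem3 (C : SMDagCat) (A : Obj C)
  (mu : Hom (otens A A) A) (u : Hom munit A) (H : Hom A A)
  (hcl : classical A mu u) (hH : complementary A mu u H) :
  comp (mtens (Xi A mu u 3 1) (idm A))
    (comp (mtens (mtens (mtens (idm A) H) H) (idm A))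
          (castm eq_refl (reassoc4 A) (mtens (idm A) (Xi A mu u 1 3))))
  = idm (otens A A).
Proof.
  set (ax := smaxioms C).
  rewrite Xi_1_3; cbn [tpow].
  rewrite (tens_idm_comp_comul A (dag mu)), !(comp_assoc ax), <- !tens_comp_idr.
  rewrite (Xi_3_1_tens_comul_r hcl), (complementary_mul_comul hH).
  rewrite (mul_idm_tens_unit_counit hcl).
  rewrite tens_castm_l, tens_assoc_r, castm_trans, comp_castm, <- tens_comp_idl.
  rewrite (counit_comul_l hcl), tens_castm_r, castm_trans, (tens_id ax).
  apply castm_id.
Qed.
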